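(* Let $W:[0,\infty)\to\mathbb{R}$ be a bounded monotone $\mathcal{C}^1$ function with $W'$ bounded, let $\Omega(r)=r^{-2}\int_0^rW(s)s\,ds$, let $m\in\mathbb{Z}\setminus\{0\}$ and $s\in\mathbb{C}$ with $\mathrm{Re}(s)\ne0$, and set $\gamma(r)=s+im\Omega(r)$. Then the equation $-\partial_r\bigl(r^2\partial_r^*u\bigr)+\Bigl(m^2+\frac{imrW'(r)}{\gamma(r)}\Bigr)u=0$ on $(0,\infty)$ has no nontrivial solution $u\in H^1(\mathbb{R}_+,r\,dr)$.
   Context: $\partial_r^*=\partial_r+\frac1r$. This is the eigenvalue equation (for the radial velocity) of the linearization at a columnar vortex for two-dimensional perturbations ($k=0$). *)

From Stdlib Require Import Reals Lra ZArith.
Open Scope R_scope.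

Definition Cx : Type := (R * R)%type.
Definition Re (z : Cx) : R := fst z.
Definition Im (z : Cx) : R := snd z.
Definition RtoC (x : R) : Cx := (x, 0).
Definition C0 : Cx := (0, 0).
Definition Ci : Cx := (0, 1).
Definition Cadd (z w : Cx) : Cx := (Re z + Re w, Im z + Im w).
Definition Cmul (z w : Cx) : Cx :=
  (Re z * Re w - Im z * Im w, Re z * Im w + Im z * Re w).
Definition Cnorm2 (z : Cx) : R := Re z * Re z + Im z * Im z.
Definition Cinv (z : Cx) : Cx := (Re z / Cnorm2 z, - Im z / Cnorm2 z).
Definition Cdiv (z w : Cx) : Cx := Cmul z (Cinv w).

Definition Cderiv_at (f : R -> Cx) (x : R) (l : Cx) : Prop :=
  derivable_pt_lim (fun t => Re (f t)) x (Re l) /\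
  derivable_pt_lim (fun t => Im (f t)) x (Im l).

Definition C1_on_nonneg (W dW : R -> R) : Prop :=
  (forall r, 0 < r -> derivable_pt_lim W r (dW r)) /\
  (forall eps, 0 < eps -> exists delta, 0 < delta /\
     forall h, 0 < h < delta -> Rabs ((W h - W 0) / h - dW 0) < eps) /\
  (forall r, 0 <= r -> forall eps, 0 < eps -> exists delta, 0 < delta /\
     forall x, 0 <= x -> Rabs (x - r) < delta -> Rabs (dW x - dW r) < eps).

Definition bounded_on_nonneg (f : R -> R) : Prop :=
  exists B, forall r, 0 <= r -> Rabs (f r) <= B.

Definition monotone_on_nonneg (f : R -> R) : Prop :=
  (forall x y, 0 <= x -> x <= y -> f x <= f y) \/
  (forall x y, 0 <= x -> x <= y -> f y <= f x).

Definition is_Omega (W Om : R -> R) : Prop :=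
  forall r, 0 < r ->
    forall pr : Riemann_integrable (fun t => W t * t) 0 r,
      Om r = RiemannInt pr / (r * r).

(** u (with derivative du on (0,oo)) lies in H^1(R_+, r dr):
    \int_0^oo (|u|^2 + |u'|^2) r dr < oo, expressed as a uniform bound on the
    integrals over all compact subintervals [a,b] of (0,oo) (the integrand is
    continuous and nonnegative). *)
Definition in_H1_rdr (u du : R -> Cx) : Prop :=
  exists M, forall a b, 0 < a -> a <= b ->
    forall pr : Riemann_integrable
                  (fun r => (Cnorm2 (u r) + Cnorm2 (du r)) * r) a b,
      RiemannInt pr <= M.

Definition gamma (s : Cx) (m : Z) (Om : R -> R) (r : R) : Cx :=
  Cadd s (Cmul Ci (RtoC (IZR m * Om r))).

Definition coef (s : Cx) (m : Z) (Om dW : R -> R) (r : R) : Cx :=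
  Cadd (RtoC (IZR m * IZR m))
       (Cmul Ci (Cdiv (RtoC (IZR m * r * dW r)) (gamma s m Om r))).

(** u solves -d_r(r^2 d_r^* u) + coef u = 0 on (0,oo), where
    d_r^* u = u' + u/r, so r^2 d_r^* u = r^2 u' + r u. *)
Definition solves_eq (s : Cx) (m : Z) (Om dW : R -> R) (u du : R -> Cx) : Prop :=
  (forall r, 0 < r -> Cderiv_at u r (du r)) /\
  (forall r, 0 < r ->
     Cderiv_at (fun t => Cadd (Cmul (RtoC (t * t)) (du t)) (Cmul (RtoC t) (u t)))
               r (Cmul (coef s m Om dW r) (u r))).

From Stdlib Require Import Reals Lra ZArith.
From Coquelicot Require Import Rcomplements Hierarchy Continuity Derive RInt RInt_analysis.
Open Scope R_scope.

(* Write [V = r^2 d_r^* u], so that the equation reads [V' = c u] with [c] the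
   coefficient, and [u' = (V - r u) / r^2].  For the flux
   [G(r) = r Re((1 - i lam) V conj(u))] one computes
   [G' = |V|^2 / r + r |u|^2 (Re c + lam Im c)].  Since [W] is monotone and
   [Re s <> 0], [Im c] has a fixed sign and, for a suitable [lam], dominates the
   bounded perturbation of [Re c], so [Re c + lam Im c >= m^2]; thus [G] is
   nondecreasing and [G' >= m^2 r |u|^2].  If [G(T) > 0], Cauchy-Schwarz and
   AM-GM give [(2 ln r + Lam / G)' <= (|u|^2 + |u'|^2) r] for [r >= T], so the
   [H^1(r dr)] energy grows like [ln r] at infinity; if [G(T) < 0], then
   [|G| <= C r^2 (|u|^2 + |u'|^2)] near [0], so the energy density is at least
   [c / r] there.  Hence [G = 0], so [G' = 0] and [u = 0]. *)

Lemma locally_of_pos (x : R) (P : R -> Prop) :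
  0 < x -> (forall y, 0 < y -> P y) -> locally x P.
Proof.
  intros Hx HP. assert (Hx2 : 0 < x / 2) by lra.
  exists (mkposreal _ Hx2). intros y Hy. apply HP.
  change (Rabs (y - x) < x / 2) in Hy. apply Rabs_def2 in Hy. simpl in Hy. lra.
Qed.

Lemma le_of_deriv_nonneg (f f' : R -> R) (a b : R) : a <= b ->
  (forall c, a <= c <= b -> derivable_pt_lim f c (f' c)) ->
  (forall c, a <= c <= b -> 0 <= f' c) -> f a <= f b.
Proof.
  intros Hab Hd Hpos. destruct (Req_dec a b) as [->|Hne]; [lra|].
  destruct (MVT_cor2 f f' a b) as [c [Hc Hmvt]]; [lra|exact Hd|].
  assert (0 <= f' c) by (apply Hpos; lra). nra.
Qed.

Lemma deriv_nonneg_of_nondecreasing (f : R -> R) (r l : R) : 0 < r ->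
  (forall x y, 0 <= x -> x <= y -> f x <= f y) ->
  derivable_pt_lim f r l -> 0 <= l.
Proof.
  intros Hr Hf Hd. destruct (Rle_lt_dec 0 l) as [|Hl]; auto. exfalso.
  assert (He : 0 < - l / 2) by lra.
  destruct (Hd _ He) as [[del Hdel] Hdd]. simpl in Hdd.
  specialize (Hdd (del / 2) ltac:(lra)).
  rewrite Rabs_pos_eq in Hdd by lra. specialize (Hdd ltac:(lra)).
  assert (Hq : 0 <= (f (r + del / 2) - f r) / (del / 2)).
  { assert (f r <= f (r + del / 2)) by (apply Hf; lra).
    apply Rdiv_le_0_compat; lra. }
  apply Rabs_def2 in Hdd. lra.
Qed.

Lemma deriv_eq0_of_vanishing (f : R -> R) (r l : R) : 0 < r ->
  (forall t, 0 < t -> f t = 0) -> derivable_pt_lim f r l -> l = 0.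
Proof.
  intros Hr Hf Hd. apply is_derive_Reals in Hd.
  apply (is_derive_ext_loc f (fun _ => 0)) in Hd; [|now apply locally_of_pos].
  apply is_derive_Reals in Hd.
  exact (uniqueness_limite _ _ _ _ Hd (derivable_pt_lim_const 0 r)).
Qed.

Lemma le_RiemannInt_of_deriv_le (h F F' : R -> R) (a b : R) : 0 < a -> a <= b ->
  (forall x, 0 < x -> continuity_pt h x) ->
  (forall x, a <= x <= b -> derivable_pt_lim F x (F' x)) ->
  (forall x, a <= x <= b -> F' x <= h x) ->
  forall pr : Riemann_integrable h a b, F b - F a <= RiemannInt pr.
Proof.
  intros Ha Hab Hc HF Hle pr. rewrite <- RInt_Reals.
  assert (Hprim : forall x, a <= x <= b ->
            derivable_pt_lim (fun y => RInt h a y) x (h x)).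
  { intros x Hx. apply is_derive_Reals, is_derive_RInt with (a := a).
    - apply locally_of_pos; [lra|]. intros y Hy.
      apply (RInt_correct (V := R_CompleteNormedModule)), ex_RInt_continuous.
      intros z [Hz _]. apply continuity_pt_filterlim, Hc.
      apply Rlt_le_trans with (2 := Hz). apply Rmin_case; lra.
    - apply continuity_pt_filterlim, Hc. lra. }
  assert (Hmono := le_of_deriv_nonneg (fun y => RInt h a y - F y)
                     (fun y => h y - F' y) a b Hab).
  simpl in Hmono. rewrite RInt_point in Hmono.
  assert (zero - F a <= RInt h a b - F b).
  { apply Hmono.
    - intros c Hcab. apply derivable_pt_lim_minus; auto.
    - intros c Hcab. specialize (Hle c Hcab). lra. }
  change (zero : R) with 0 in *. lra.
Qed.

(* Extending the weight evenly makes it continuous at [0] from both sides,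
   using only the boundedness of [W] near [0]. *)
Lemma continuity_weight_abs (W : R -> R) (B : R) :
  (forall r, 0 < r -> continuity_pt W r) ->
  (forall r, 0 <= r -> Rabs (W r) <= B) ->
  forall x, continuity_pt (fun t => W (Rabs t) * Rabs t) x.
Proof.
  intros HW HB x. destruct (Req_dec x 0) as [->|Hx].
  - intros eps Heps.
    assert (HB0 : 0 <= B) by (specialize (HB 0 (Rle_refl 0)); pose proof (Rabs_pos (W 0)); lra).
    exists (eps / (B + 1)). split; [apply Rdiv_lt_0_compat; lra|].
    intros y [_ Hy]. simpl in *. unfold R_dist in *.
    rewrite Rabs_R0, Rmult_0_r, Rminus_0_r. rewrite Rminus_0_r in Hy.
    rewrite Rabs_mult, Rabs_Rabsolu.
    apply Rle_lt_trans with ((B + 1) * Rabs y).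
    + apply Rmult_le_compat_r; [apply Rabs_pos|].
      specialize (HB (Rabs y) (Rabs_pos y)). lra.
    + apply Rmult_lt_reg_r with (/ (B + 1)); [apply Rinv_0_lt_compat; lra|].
      replace ((B + 1) * Rabs y * / (B + 1)) with (Rabs y) by (field; lra).
      exact Hy.
  - apply (continuity_pt_mult (fun t => W (Rabs t)) Rabs); [|apply Rcontinuity_abs].
    apply (continuity_pt_comp Rabs W); [apply Rcontinuity_abs|].
    apply HW, Rabs_pos_lt, Hx.
Qed.

Lemma Omega_bound (W Om : R -> R) (B : R) :
  (forall r, 0 < r -> continuity_pt W r) ->
  (forall r, 0 <= r -> Rabs (W r) <= B) -> is_Omega W Om ->
  forall r, 0 < r -> Rabs (Om r) <= B.
Proof.
  intros HW HB HOm r Hr.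
  assert (prabs : Riemann_integrable (fun t => W (Rabs t) * Rabs t) 0 r)
    by (apply continuity_implies_RiemannInt; [lra|];
        intros; apply (continuity_weight_abs W B); auto).
  assert (pr : Riemann_integrable (fun t => W t * t) 0 r).
  { apply Riemann_integrable_ext with (2 := prabs). intros x Hx.
    rewrite Rmin_left, Rmax_right in Hx by lra. rewrite Rabs_right by lra. reflexivity. }
  rewrite (HOm r Hr pr), <- RInt_Reals.
  assert (Hint : Rabs (RInt (fun t => W t * t) 0 r) <= (r - 0) * (B * r)).
  { apply abs_RInt_le_const; [lra|apply ex_RInt_Reals_1, pr|].
    intros t Ht. rewrite Rabs_mult, (Rabs_right t) by lra.
    apply Rmult_le_compat; [apply Rabs_pos|lra|apply HB; lra|lra]. }
  unfold Rdiv. rewrite Rabs_mult, Rabs_inv, (Rabs_right (r * r)) by nra.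
  apply Rmult_le_reg_r with (r * r); [nra|].
  rewrite Rmult_assoc, Rinv_l by nra. nra.
Qed.

Lemma monotone_deriv_sign (W dW : R -> R) :
  (forall r, 0 < r -> derivable_pt_lim W r (dW r)) -> monotone_on_nonneg W ->
  exists e, (e = 1 \/ e = -1) /\ forall r, 0 < r -> 0 <= e * dW r.
Proof.
  intros HW [Hinc|Hdec].
  - exists 1. split; [now left|]. intros r Hr. rewrite Rmult_1_l.
    exact (deriv_nonneg_of_nondecreasing W r _ Hr Hinc (HW r Hr)).
  - exists (-1). split; [now right|]. intros r Hr.
    assert (0 <= - dW r); [|lra].
    apply (deriv_nonneg_of_nondecreasing (fun t => - W t) r _ Hr).
    + intros x y Hx Hxy. specialize (Hdec x y Hx Hxy). lra.
    + now apply derivable_pt_lim_opp, HW.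
Qed.

Lemma Cnorm2_ge0 (z : Cx) : 0 <= Cnorm2 z.
Proof. unfold Cnorm2. nra. Qed.

Lemma Cnorm2_eq0 (z : Cx) : Cnorm2 z = 0 -> z = C0.
Proof.
  destruct z as [x y]. unfold Cnorm2, C0, Re, Im; simpl. intros Hz.
  assert (x = 0) by nra. assert (y = 0) by nra. now subst.
Qed.

Lemma Cnorm2_gt0_of_Re (z : Cx) : Re z <> 0 -> 0 < Cnorm2 z.
Proof. intros Hz. unfold Cnorm2. assert (0 < Re z * Re z) by nra. nra. Qed.

Lemma Re_gamma s m Om r : Re (gamma s m Om r) = Re s.
Proof. unfold gamma, Cadd, Cmul, Ci, RtoC, Re, Im; simpl. ring. Qed.

Lemma Im_gamma s m Om r : Im (gamma s m Om r) = Im s + IZR m * Om r.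
Proof. unfold gamma, Cadd, Cmul, Ci, RtoC, Re, Im; simpl. ring. Qed.

(* With [X = m r W'(r)], the coefficient is [m^2 + i X conj(gamma) / |gamma|^2]. *)
Lemma Re_coef s m Om dW r :
  Re (coef s m Om dW r) = IZR m * IZR m
    + IZR m * r * dW r * Im (gamma s m Om r) / Cnorm2 (gamma s m Om r).
Proof.
  unfold coef, Cdiv, Cinv, Cadd, Cmul, Ci, RtoC, Re, Im; simpl. unfold Rdiv. ring.
Qed.

Lemma Im_coef s m Om dW r :
  Im (coef s m Om dW r) =
    IZR m * r * dW r * Re (gamma s m Om r) / Cnorm2 (gamma s m Om r).
Proof.
  unfold coef, Cdiv, Cinv, Cadd, Cmul, Ci, RtoC, Re, Im; simpl. unfold Rdiv. ring.
Qed.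

Lemma dominated_cross_term (X b a K e : R) : (e = 1 \/ e = -1) ->
  0 <= e * X * a -> Rabs b <= K * Rabs a -> 0 <= X * b + e * K * (X * a).
Proof.
  intros He HXa Hb.
  assert (Habs : e * X * a = Rabs X * Rabs a).
  { rewrite <- Rabs_mult, <- (Rabs_pos_eq _ HXa), !Rabs_mult.
    destruct He as [-> | ->]; [rewrite Rabs_R1|rewrite Rabs_left by lra]; ring. }
  assert (- (X * b) <= Rabs X * Rabs b)
    by (rewrite <- Rabs_mult; pose proof (Rle_abs (- (X * b))) as Hn;
        rewrite Rabs_Ropp in Hn; exact Hn).
  pose proof (Rabs_pos X).
  replace (e * K * (X * a)) with (K * (e * X * a)) by ring. rewrite Habs. nra.
Qed.

(* The imaginary part of the coefficient has a fixed sign because [W] is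
   monotone and [Re s <> 0]; a large multiple of it absorbs the real part. *)
Lemma coef_coercive (W dW Om : R -> R) (m : Z) (s : Cx) (B : R) :
  (forall r, 0 < r -> derivable_pt_lim W r (dW r)) -> monotone_on_nonneg W ->
  (forall r, 0 < r -> Rabs (Om r) <= B) -> Re s <> 0 ->
  exists lam, forall r, 0 < r ->
    IZR m * IZR m <= Re (coef s m Om dW r) + lam * Im (coef s m Om dW r).
Proof.
  intros HW Hmon HOm Hs.
  destruct (monotone_deriv_sign W dW HW Hmon) as [e [He HedW]].
  set (K := (Rabs (Im s) + Rabs (IZR m) * B) / Rabs (Re s)).
  set (e' := if Rle_dec 0 (IZR m * Re s) then e else - e).
  assert (He' : e' = 1 \/ e' = -1)
    by (unfold e'; destruct Rle_dec; lra).
  exists (e' * K). intros r Hr.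
  rewrite Re_coef, Im_coef, Re_gamma, Im_gamma.
  pose proof (Cnorm2_gt0_of_Re (gamma s m Om r) ltac:(now rewrite Re_gamma)) as HN.
  set (N := Cnorm2 (gamma s m Om r)) in *.
  set (X := IZR m * r * dW r).
  assert (Hcross : 0 <= X * (Im s + IZR m * Om r) + e' * K * (X * Re s)).
  { apply dominated_cross_term; auto.
    - specialize (HedW r Hr). unfold e', X. destruct Rle_dec as [Hms|Hms].
      + replace (e * (IZR m * r * dW r) * Re s) with (IZR m * Re s * r * (e * dW r))
          by ring. apply Rmult_le_pos; [apply Rmult_le_pos|]; lra.
      + replace (- e * (IZR m * r * dW r) * Re s) with (- (IZR m * Re s) * r * (e * dW r))
          by ring. apply Rmult_le_pos; [apply Rmult_le_pos|]; lra.
    - unfold K. pose proof (Rabs_pos_lt _ Hs).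
      replace ((Rabs (Im s) + Rabs (IZR m) * B) / Rabs (Re s) * Rabs (Re s))
        with (Rabs (Im s) + Rabs (IZR m) * B) by (field; lra).
      eapply Rle_trans; [apply Rabs_triang|]. rewrite Rabs_mult.
      apply Rplus_le_compat_l, Rmult_le_compat_l; [apply Rabs_pos|auto]. }
  replace (IZR m * IZR m + X * (Im s + IZR m * Om r) / N + e' * K * (X * Re s / N))
    with (IZR m * IZR m + (X * (Im s + IZR m * Om r) + e' * K * (X * Re s)) / N)
    by (field; lra).
  assert (0 <= (X * (Im s + IZR m * Om r) + e' * K * (X * Re s)) / N)
    by (apply Rdiv_le_0_compat; [exact Hcross|exact HN]).
  lra.
Qed.

Lemma two_div_le_add (t a b : R) : 0 < t -> 0 <= a -> 0 <= b ->
  1 <= t * t * (a * b) -> 2 / t <= a + b.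
Proof.
  intros Ht Ha Hb Hab.
  assert (Hsq : 4 <= (t * (a + b)) * (t * (a + b)))
    by (pose proof (Rle_0_sqr (t * a - t * b)); unfold Rsqr in *; nra).
  assert (H2 : 2 <= t * (a + b)).
  { assert (0 <= t * (a + b)) by (apply Rmult_le_pos; lra). nra. }
  apply Rmult_le_reg_l with t; [lra|]. field_simplify; lra.
Qed.

Lemma Cauchy_Schwarz_2 (l x y : R) :
  (x + l * y) * (x + l * y) <= (1 + l * l) * (x * x + y * y).
Proof. pose proof (Rle_0_sqr (l * x - y)). unfold Rsqr in *. nra. Qed.

Definition rsq_dstar (u du : R -> Cx) (t : R) : Cx :=
  Cadd (Cmul (RtoC (t * t)) (du t)) (Cmul (RtoC t) (u t)).

Lemma Re_rsq_dstar u du t : Re (rsq_dstar u du t) = t * t * Re (du t) + t * Re (u t).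
Proof. unfold rsq_dstar, Cadd, Cmul, RtoC, Re, Im; simpl. ring. Qed.

Lemma Im_rsq_dstar u du t : Im (rsq_dstar u du t) = t * t * Im (du t) + t * Im (u t).
Proof. unfold rsq_dstar, Cadd, Cmul, RtoC, Re, Im; simpl. ring. Qed.

(* [flux lam u du t = t Re((1 - i lam) V conj(u))] with [V = r^2 d_r^* u]. *)
Definition flux (lam : R) (u du : R -> Cx) (t : R) : R :=
  let V := rsq_dstar u du t in
  t * ((Re V * Re (u t) + Im V * Im (u t)) + lam * (Im V * Re (u t) - Re V * Im (u t))).

Definition flux_deriv (lam : R) (u du c : R -> Cx) (t : R) : R :=
  Cnorm2 (rsq_dstar u du t) / t
  + t * Cnorm2 (u t) * (Re (c t) + lam * Im (c t)).

Definition energy_density (u du : R -> Cx) (t : R) : R :=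
  (Cnorm2 (u t) + Cnorm2 (du t)) * t.

Lemma flux_sq_le lam u du t :
  flux lam u du t * flux lam u du t
  <= (1 + lam * lam) * (t * t * Cnorm2 (rsq_dstar u du t) * Cnorm2 (u t)).
Proof.
  unfold flux, Cnorm2. cbv zeta.
  set (V := rsq_dstar u du t).
  set (X := t * (Re V * Re (u t) + Im V * Im (u t))).
  set (Y := t * (Im V * Re (u t) - Re V * Im (u t))).
  replace (t * (Re V * Re (u t) + Im V * Im (u t) + lam * (Im V * Re (u t) - Re V * Im (u t))))
    with (X + lam * Y) by (unfold X, Y; ring).
  eapply Rle_trans; [apply Cauchy_Schwarz_2|]. right. unfold X, Y. ring.
Qed.

Lemma sq_scaled_add_le (t d x : R) : 0 < t <= 1 ->
  (t * t * d + t * x) * (t * t * d + t * x) <= 2 * (t * t) * (d * d + x * x).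
Proof.
  intros Ht.
  assert (E : 2 * (t * t) * (d * d + x * x) - (t * t * d + t * x) * (t * t * d + t * x)
              = t * t * ((t * d - x) * (t * d - x) + 2 * (d * d) * (1 - t * t))) by ring.
  assert (0 <= t * t * ((t * d - x) * (t * d - x) + 2 * (d * d) * (1 - t * t))).
  { apply Rmult_le_pos; [nra|]. pose proof (Rle_0_sqr (t * d - x)).
    pose proof (Rle_0_sqr d). assert (0 <= 1 - t * t) by nra.
    unfold Rsqr in *. assert (0 <= d * d * (1 - t * t)) by (apply Rmult_le_pos; lra). lra. }
  lra.
Qed.

Lemma Cnorm2_rsq_dstar_le u du t : 0 < t <= 1 ->
  Cnorm2 (rsq_dstar u du t) <= 2 * (t * t) * (Cnorm2 (u t) + Cnorm2 (du t)).
Proof.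
  intros Ht. unfold Cnorm2. rewrite Re_rsq_dstar, Im_rsq_dstar.
  pose proof (sq_scaled_add_le t (Re (du t)) (Re (u t)) Ht).
  pose proof (sq_scaled_add_le t (Im (du t)) (Im (u t)) Ht). lra.
Qed.

Lemma flux_sq_le_energy lam u du t : 0 < t <= 1 ->
  flux lam u du t * flux lam u du t
  <= 2 * (1 + lam * lam) * ((t * energy_density u du t) * (t * energy_density u du t)).
Proof.
  intros Ht. eapply Rle_trans; [apply flux_sq_le|].
  pose proof (Cnorm2_rsq_dstar_le u du t Ht).
  pose proof (Cnorm2_ge0 (u t)). pose proof (Cnorm2_ge0 (du t)).
  pose proof (Cnorm2_ge0 (rsq_dstar u du t)).
  unfold energy_density.
  set (U := Cnorm2 (u t)) in *. set (P := Cnorm2 (du t)) in *.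
  set (A := Cnorm2 (rsq_dstar u du t)) in *.
  assert (0 <= lam * lam) by nra. assert (0 <= t * t) by nra.
  assert (A * U <= 2 * (t * t) * (U + P) * (U + P)) by nra.
  replace (2 * (1 + lam * lam) * ((t * ((U + P) * t)) * (t * ((U + P) * t))))
    with ((1 + lam * lam) * (t * t) * (2 * (t * t) * (U + P) * (U + P))) by ring.
  replace ((1 + lam * lam) * (t * t * A * U)) with ((1 + lam * lam) * (t * t) * (A * U))
    by ring.
  apply Rmult_le_compat_l; [nra|assumption].
Qed.

Section Flux.

Variables (u du c : R -> Cx) (lam kappa M : R).
Hypothesis Hkappa : 0 < kappa.
Hypothesis Hu : forall r, 0 < r -> Cderiv_at u r (du r).
Hypothesis HV : forall r, 0 < r -> Cderiv_at (rsq_dstar u du) r (Cmul (c r) (u r)).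
Hypothesis Hcoer : forall r, 0 < r -> kappa <= Re (c r) + lam * Im (c r).
Hypothesis HM : forall a b, 0 < a -> a <= b ->
  forall pr : Riemann_integrable (energy_density u du) a b, RiemannInt pr <= M.

Local Notation G := (flux lam u du).
Local Notation D := (flux_deriv lam u du c).
Local Notation h := (energy_density u du).
Local Notation Lam := (1 + lam * lam).

Lemma flux_derivable t : 0 < t -> derivable_pt_lim G t (D t).
Proof.
  intros Ht. destruct (Hu t Ht) as [Hu1 Hu2]. destruct (HV t Ht) as [HV1 HV2].
  unfold flux, flux_deriv.
  set (V1 := fun t => Re (rsq_dstar u du t)) in *.
  set (V2 := fun t => Im (rsq_dstar u du t)) in *.
  set (u1 := fun t => Re (u t)) in *. set (u2 := fun t => Im (u t)) in *.
  cbv zeta.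
  change (derivable_pt_lim
    (fun t => t * ((V1 t * u1 t + V2 t * u2 t) + lam * (V2 t * u1 t - V1 t * u2 t))) t
    (Cnorm2 (rsq_dstar u du t) / t + t * Cnorm2 (u t) * (Re (c t) + lam * Im (c t)))).
  assert (E : Cnorm2 (rsq_dstar u du t) / t
               + t * Cnorm2 (u t) * (Re (c t) + lam * Im (c t))
             = 1 * ((V1 t * u1 t + V2 t * u2 t) + lam * (V2 t * u1 t - V1 t * u2 t))
               + t * ((Re (Cmul (c t) (u t)) * u1 t + V1 t * Re (du t)
                       + (Im (Cmul (c t) (u t)) * u2 t + V2 t * Im (du t)))
                      + (0 * (V2 t * u1 t - V1 t * u2 t)
                         + lam * ((Im (Cmul (c t) (u t)) * u1 t + V2 t * Re (du t))
                                  - (Re (Cmul (c t) (u t)) * u2 t + V1 t * Im (du t)))))).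
  { unfold V1, V2, u1, u2, Cnorm2. rewrite Re_rsq_dstar, Im_rsq_dstar.
    unfold Cmul, Re, Im; simpl. field. lra. }
  rewrite E. clearbody V1 V2 u1 u2.
  repeat first
    [ apply (derivable_pt_lim_mult (fun t => _) (fun t => _))
    | apply (derivable_pt_lim_minus (fun t => _) (fun t => _))
    | apply (derivable_pt_lim_plus (fun t => _) (fun t => _))
    | apply derivable_pt_lim_id | apply derivable_pt_lim_const | assumption ].
Qed.

Lemma flux_deriv_lower t : 0 < t ->
  Cnorm2 (rsq_dstar u du t) / t + kappa * t * Cnorm2 (u t) <= D t.
Proof.
  intros Ht. unfold flux_deriv.
  assert (0 <= t * Cnorm2 (u t)) by (apply Rmult_le_pos; [lra|apply Cnorm2_ge0]).
  specialize (Hcoer t Ht). nra.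
Qed.

Lemma flux_deriv_nonneg t : 0 < t -> 0 <= D t.
Proof.
  intros Ht. eapply Rle_trans; [|apply flux_deriv_lower, Ht].
  assert (0 <= Cnorm2 (rsq_dstar u du t) / t)
    by (apply Rdiv_le_0_compat; [apply Cnorm2_ge0|exact Ht]).
  assert (0 <= kappa * t * Cnorm2 (u t))
    by (apply Rmult_le_pos; [nra|apply Cnorm2_ge0]).
  lra.
Qed.

Lemma flux_nondecreasing x y : 0 < x -> x <= y -> G x <= G y.
Proof.
  intros Hx Hxy. apply (le_of_deriv_nonneg G D x y Hxy).
  - intros z Hz. apply flux_derivable. lra.
  - intros z Hz. apply flux_deriv_nonneg. lra.
Qed.

Lemma energy_density_continuous t : 0 < t -> continuity_pt h t.
Proof.
  intros Ht.
  assert (Hcont : forall f df, (forall y, 0 < y -> derivable_pt_lim f y (df y)) ->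
                  continuity_pt f t)
    by (intros f df Hf; apply derivable_continuous_pt; exists (df t); apply Hf, Ht).
  assert (Cu1 : continuity_pt (fun y => Re (u y)) t)
    by (apply (Hcont _ (fun y => Re (du y))); intros y Hy; apply (Hu y Hy)).
  assert (Cu2 : continuity_pt (fun y => Im (u y)) t)
    by (apply (Hcont _ (fun y => Im (du y))); intros y Hy; apply (Hu y Hy)).
  assert (CV1 : continuity_pt (fun y => Re (rsq_dstar u du y)) t)
    by (apply (Hcont _ (fun y => Re (Cmul (c y) (u y)))); intros y Hy; apply (HV y Hy)).
  assert (CV2 : continuity_pt (fun y => Im (rsq_dstar u du y)) t)
    by (apply (Hcont _ (fun y => Im (Cmul (c y) (u y)))); intros y Hy; apply (HV y Hy)).
  assert (Cd1 : continuity_pt (fun y => Re (du y)) t).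
  { apply continuity_pt_ext_loc
      with (f := fun y => (Re (rsq_dstar u du y) - y * Re (u y)) / (y * y)).
    - apply locally_of_pos; [exact Ht|]. intros y Hy. rewrite Re_rsq_dstar. field. lra.
    - apply (continuity_pt_div (fun y => _) (fun y => _));
        [|apply continuity_pt_mult; apply continuity_pt_id|nra].
      apply (continuity_pt_minus (fun y => _) (fun y => _)); [exact CV1|].
      apply (continuity_pt_mult (fun y => _) (fun y => _)); [apply continuity_pt_id|exact Cu1]. }
  assert (Cd2 : continuity_pt (fun y => Im (du y)) t).
  { apply continuity_pt_ext_loc
      with (f := fun y => (Im (rsq_dstar u du y) - y * Im (u y)) / (y * y)).
    - apply locally_of_pos; [exact Ht|]. intros y Hy. rewrite Im_rsq_dstar. field. lra.
    - apply (continuity_pt_div (fun y => _) (fun y => _));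
        [|apply continuity_pt_mult; apply continuity_pt_id|nra].
      apply (continuity_pt_minus (fun y => _) (fun y => _)); [exact CV2|].
      apply (continuity_pt_mult (fun y => _) (fun y => _)); [apply continuity_pt_id|exact Cu2]. }
  unfold energy_density, Cnorm2.
  repeat first
    [ apply (continuity_pt_mult (fun y => _) (fun y => _))
    | apply (continuity_pt_plus (fun y => _) (fun y => _))
    | apply continuity_pt_id | assumption ].
Qed.

Lemma energy_bounds_growth (F F' : R -> R) (a b : R) : 0 < a -> a <= b ->
  (forall x, a <= x <= b -> derivable_pt_lim F x (F' x)) ->
  (forall x, a <= x <= b -> F' x <= h x) -> F b - F a <= M.
Proof.
  intros Ha Hab HF Hle.
  assert (pr : Riemann_integrable h a b).
  { apply continuity_implies_RiemannInt; [exact Hab|].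
    intros x Hx. apply energy_density_continuous. lra. }
  eapply Rle_trans; [|apply (HM a b Ha Hab pr)].
  apply le_RiemannInt_of_deriv_le with (F' := F'); auto. exact energy_density_continuous.
Qed.

(* Where the flux is positive, Cauchy-Schwarz and [|V|^2 <= t G'] give
   [G^2 <= Lam t^3 |u|^2 G'], and AM-GM turns this into the rate below. *)
Lemma flux_pos_rate t : 0 < t -> 0 < G t ->
  2 / t - Lam * D t / (G t * G t) <= h t.
Proof.
  intros Ht HGt.
  pose proof (flux_sq_le lam u du t) as HG2.
  pose proof (flux_deriv_lower t Ht) as HD.
  pose proof (Cnorm2_ge0 (u t)). pose proof (Cnorm2_ge0 (du t)).
  pose proof (Cnorm2_ge0 (rsq_dstar u du t)).
  assert (HDt : 0 <= D t) by (apply flux_deriv_nonneg, Ht).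
  set (U := Cnorm2 (u t)) in *. set (A := Cnorm2 (rsq_dstar u du t)) in *.
  assert (HA : A <= t * D t).
  { assert (0 <= kappa * t * U) by (apply Rmult_le_pos; [nra|auto]).
    replace A with (t * (A / t)) by (field; lra).
    apply Rmult_le_compat_l; lra. }
  assert (HGG : 0 < G t * G t) by nra.
  assert (Hrate : 2 / t <= t * U + Lam * D t / (G t * G t)).
  { apply two_div_le_add; [exact Ht|nra|apply Rdiv_le_0_compat; nra|].
    replace (t * t * (t * U * (Lam * D t / (G t * G t))))
      with (Lam * (t * t * (t * D t) * U) / (G t * G t)) by (field; lra).
    apply Rle_div_r; [exact HGG|]. rewrite Rmult_1_l.
    eapply Rle_trans; [exact HG2|].
    apply Rmult_le_compat_l; [nra|].
    apply Rmult_le_compat_r; [auto|]. apply Rmult_le_compat_l; [nra|exact HA]. }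
  unfold energy_density. fold U. nra.
Qed.

Lemma flux_nonpos T : 0 < T -> G T <= 0.
Proof.
  intros HT. apply Rnot_lt_le. intros HGT.
  assert (HGpos : forall t, T <= t -> 0 < G t)
    by (intros t Ht; eapply Rlt_le_trans; [exact HGT|apply flux_nondecreasing; lra]).
  assert (HLam : 0 < Lam) by nra.
  set (k := (Rabs M + 1 + Lam / G T) / 2).
  assert (Hk : 0 < k).
  { unfold k. pose proof (Rabs_pos M).
    pose proof (Rdiv_lt_0_compat _ _ HLam HGT). lra. }
  set (b := T * exp k).
  assert (Hb : T <= b).
  { unfold b. assert (1 <= exp k) by (left; rewrite <- exp_0; apply exp_increasing; lra). nra. }
  assert (Hlnb : ln b = ln T + k)
    by (unfold b; rewrite ln_mult, ln_exp; [reflexivity|lra|apply exp_pos]).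
  assert (HGb : 0 < Lam / G b) by (apply Rdiv_lt_0_compat; [lra|apply HGpos; lra]).
  assert (Hgrowth : 2 * ln b + Lam / G b - (2 * ln T + Lam / G T) <= M).
  { apply (energy_bounds_growth (fun t => 2 * ln t + Lam / G t)
                                 (fun t => 2 / t - Lam * D t / (G t * G t)));
      [exact HT|exact Hb| |].
    - intros x Hx. pose proof (HGpos x (proj1 Hx)).
      replace (2 / x - Lam * D x / (G x * G x))
        with ((0 * ln x + 2 * / x) + (0 * G x - D x * Lam) / (G x)²)
        by (unfold Rsqr; field; lra).
      apply (derivable_pt_lim_plus (fun t => _) (fun t => _)).
      + apply (derivable_pt_lim_mult (fun t => _) ln);
          [apply derivable_pt_lim_const|apply derivable_pt_lim_ln; lra].
      + apply (derivable_pt_lim_div (fun _ => Lam) G);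
          [apply derivable_pt_lim_const|apply flux_derivable; lra|lra].
    - intros x Hx. apply flux_pos_rate; [lra|apply HGpos; lra]. }
  pose proof (Rle_abs M). unfold k in Hlnb. lra.
Qed.

Lemma flux_neg_rate T t : 0 < t <= 1 -> t <= T -> G T < 0 ->
  - G T / (2 * Lam) <= t * h t.
Proof.
  intros Ht HtT HGT.
  assert (HGt : G t <= G T) by (apply flux_nondecreasing; lra).
  pose proof (flux_sq_le_energy lam u du t Ht) as HG2.
  assert (Hth : 0 <= t * h t).
  { unfold energy_density. pose proof (Cnorm2_ge0 (u t)).
    pose proof (Cnorm2_ge0 (du t)). apply Rmult_le_pos; nra. }
  assert (HLam : 1 <= Lam) by nra.
  set (rho := - G T / (2 * Lam)).
  assert (Hc : 0 < rho) by (apply Rdiv_lt_0_compat; lra).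
  assert (Hc2 : rho * rho <= (t * h t) * (t * h t)).
  { replace (rho * rho) with (G T * G T / (4 * (Lam * Lam))) by (unfold rho; field; lra).
    apply Rle_div_l; [nra|].
    assert (G T * G T <= G t * G t) by nra. nra. }
  nra.
Qed.

Lemma flux_nonneg T : 0 < T -> 0 <= G T.
Proof.
  intros HT. apply Rnot_lt_le. intros HGT.
  set (T1 := Rmin T 1).
  assert (HT1 : 0 < T1) by (unfold T1; apply Rmin_case; lra).
  assert (HT1T : T1 <= T) by apply Rmin_l.
  assert (HT11 : T1 <= 1) by apply Rmin_r.
  set (rho := - G T / (2 * Lam)).
  assert (Hc : 0 < rho) by (apply Rdiv_lt_0_compat; nra).
  set (k := (Rabs M + 1) / rho).
  assert (Hck : rho * k = Rabs M + 1) by (unfold k; field; lra).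
  set (a := T1 * exp (- k)).
  assert (Ha : 0 < a) by (apply Rmult_lt_0_compat; [lra|apply exp_pos]).
  assert (HaT1 : a <= T1).
  { assert (0 < k) by (unfold k; pose proof (Rabs_pos M); apply Rdiv_lt_0_compat; lra).
    assert (exp (- k) <= 1) by (left; rewrite <- exp_0; apply exp_increasing; lra).
    unfold a. nra. }
  assert (Hlna : ln a = ln T1 - k)
    by (unfold a; rewrite ln_mult, ln_exp; [ring|lra|apply exp_pos]).
  assert (Hgrowth : rho * ln T1 - rho * ln a <= M).
  { apply (energy_bounds_growth (fun t => rho * ln t) (fun t => 0 * ln t + rho * / t));
      [exact Ha|exact HaT1| |].
    - intros x Hx. apply (derivable_pt_lim_mult (fun t => _) ln);
        [apply derivable_pt_lim_const|apply derivable_pt_lim_ln; lra].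
    - intros x Hx. pose proof (flux_neg_rate T x ltac:(lra) ltac:(lra) HGT) as Hrate.
      fold rho in Hrate. apply Rmult_le_reg_l with x; [lra|].
      replace (x * (0 * ln x + rho * / x)) with rho by (field; lra). exact Hrate. }
  rewrite Hlna in Hgrowth. pose proof (Rle_abs M). nra.
Qed.

Lemma solution_vanishes r : 0 < r -> u r = C0.
Proof.
  intros Hr.
  assert (HG0 : forall t, 0 < t -> G t = 0)
    by (intros t Ht; apply Rle_antisym; [apply flux_nonpos|apply flux_nonneg]; exact Ht).
  assert (HD0 : D r = 0)
    by exact (deriv_eq0_of_vanishing G r (D r) Hr HG0 (flux_derivable r Hr)).
  pose proof (flux_deriv_lower r Hr) as Hlow. rewrite HD0 in Hlow.
  pose proof (Cnorm2_ge0 (u r)).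
  assert (0 <= Cnorm2 (rsq_dstar u du r) / r)
    by (apply Rdiv_le_0_compat; [apply Cnorm2_ge0|exact Hr]).
  apply Cnorm2_eq0. assert (0 < kappa * r) by nra. nra.
Qed.

End Flux.

Theorem proposition2p3 (W dW Om : R -> R) (m : Z) (s : Cx) (u du : R -> Cx) :
  C1_on_nonneg W dW ->
  bounded_on_nonneg W ->
  monotone_on_nonneg W ->
  bounded_on_nonneg dW ->
  is_Omega W Om ->
  m <> 0%Z ->
  Re s <> 0 ->
  solves_eq s m Om dW u du ->
  in_H1_rdr u du ->
  forall r, 0 < r -> u r = C0.
Proof.
  intros [HW' _] [B HB] Hmon _ HOm Hm Hs [Hu HV] [M HM].
  assert (HWcont : forall r, 0 < r -> continuity_pt W r)
    by (intros r Hr; apply derivable_continuous_pt; exists (dW r); apply HW', Hr).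
  destruct (coef_coercive W dW Om m s B HW' Hmon
              (Omega_bound W Om B HWcont HB HOm) Hs) as [lam Hcoer].
  assert (Hm2 : 0 < IZR m * IZR m)
    by (apply Rsqr_pos_lt, not_0_IZR, Hm).
  exact (solution_vanishes u du (coef s m Om dW) lam (IZR m * IZR m) M
           Hm2 Hu HV Hcoer HM).
Qed.
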